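(* Let $f\in\mathbb{R}[X_1,\dots,X_n]$ be a non-constant polynomial of degree $2d$ with $|\Omega|=1$. Then $f_*=f_{sos}=f_{gp}$.
   Context: $\mathbb{N}=\{0,1,2,\dots\}$. For $\alpha\in\mathbb{N}^n$ write $\underline{X}^\alpha=X_1^{\alpha_1}\cdots X_n^{\alpha_n}$, $|\alpha|=\sum_i\alpha_i$, and for $a\in\mathbb{R}^n$, $a^\alpha=\prod_i a_i^{\alpha_i}$ with $0^0=1$. For $f=\sum_\alpha f_\alpha\underline{X}^\alpha$ of degree $2d$: $f_0$ is the constant term, $f_{2d,i}$ the coefficient of $X_i^{2d}$, $\Omega=\{\alpha: f_\alpha\ne0\}\setminus\{\underline{0},2d\epsilon_1,\dots,2d\epsilon_n\}$, $\Delta=\{\alpha\in\Omega:\ f_\alpha<0\text{ or }\alpha_i\text{ odd for some }i\}$, $\Delta^{<2d}=\{\alpha\in\Delta:|\alpha|<2d\}$. Define $f_*=\inf\{f(x):x\in\mathbb{R}^n\}$, $f_{sos}=\sup\{r\in\mathbb{R}: f-r\text{ is a sum of squares of polynomials}\}$, and $f_{gp}=\sup$ of the set of $r\in\mathbb{R}$ for which there exist reals $a_{\alpha,i}\ge0$ ($\alpha\in\Delta$, $i=1,\dots,n$), with $a_{\alpha,i}=0$ iff $\alpha_i=0$, such that, with $a_\alpha=(a_{\alpha,1},\dots,a_{\alpha,n})$: (1) $(2d)^{2d}a_\alpha^\alpha=|f_\alpha|^{2d}\alpha^\alpha$ for each $\alpha\in\Delta$ with $|\alpha|=2d$; (2)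 $f_{2d,i}\ge\sum_{\alpha\in\Delta}a_{\alpha,i}$ for all $i$; (3) $f_0-r\ge\sum_{\alpha\in\Delta^{<2d}}(2d-|\alpha|)\big[\frac{|f_\alpha|^{2d}\alpha^\alpha}{(2d)^{2d}a_\alpha^\alpha}\big]^{1/(2d-|\alpha|)}$ (with $\sup\emptyset=-\infty$). *)

From HB Require Import structures.
From mathcomp Require Import all_boot all_order all_algebra.
Import Order.TTheory GRing.Theory Num.Theory.
From mathcomp Require Import mpoly.
From mathcomp Require Import boolp classical_sets reals constructive_ereal ereal exp.
Set Implicit Arguments. Unset Strict Implicit. Unset Printing Implicit Defensive.
Local Open Scope ring_scope.

Definition pure_mnm (n d : nat) (i : 'I_n) : 'X_{1..n} := mnm_muln (mnm1 i) (2 * d).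

Definition excluded_mnm (n d : nat) (m : 'X_{1..n}) : bool :=
  (m == mnm0) || [exists i : 'I_n, m == pure_mnm d i].

Section Defs.
Variables (R : realType) (n : nat).

Definition Omega (f : {mpoly R[n]}) (d : nat) : seq 'X_{1..n} :=
  [seq m <- msupp f | ~~ excluded_mnm d m].

Definition Delta (f : {mpoly R[n]}) (d : nat) : seq 'X_{1..n} :=
  [seq m <- Omega f d | (f@_m < 0) || [exists i : 'I_n, odd (m i)]].

Definition Delta_lt (f : {mpoly R[n]}) (d : nat) : seq 'X_{1..n} :=
  [seq m <- Delta f d | (mdeg m < 2 * d)%N].

(* a^alpha = prod_i a_i^{alpha_i}  (with 0^0 = 1) *)
Definition mpow (a : 'I_n -> R) (m : 'X_{1..n}) : R := \prod_(i < n) a i ^+ m i.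

Definition mself (m : 'X_{1..n}) : R := mpow (fun i => (m i)%:R) m.

Definition gp_feasible (f : {mpoly R[n]}) (d : nat) (r : R) : Prop :=
  exists a : 'X_{1..n} -> 'I_n -> R,
    (forall m, m \in Delta f d -> forall i : 'I_n,
        0 <= a m i /\ (a m i = 0 <-> m i = 0%N)) /\
    (forall m, m \in Delta f d -> mdeg m = (2 * d)%N ->
        ((2 * d)%N%:R ^+ (2 * d)) * mpow (a m) m
        = `|f@_m| ^+ (2 * d) * mself m) /\
    (forall i : 'I_n, \sum_(m <- Delta f d) a m i <= f@_(pure_mnm d i)) /\
    (\sum_(m <- Delta_lt f d)
        ((2 * d - mdeg m)%N%:R *
         powR (`|f@_m| ^+ (2 * d) * mself m / (((2 * d)%N%:R ^+ (2 * d)) * mpow (a m) m))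
              (((2 * d - mdeg m)%N%:R)^-1))
      <= f@_mnm0 - r).

Definition is_sos (p : {mpoly R[n]}) : Prop :=
  exists s : seq {mpoly R[n]}, p = \sum_(q <- s) q ^+ 2.

(* f_* = inf_x f(x), f_sos, f_gp, as extended reals (sup of empty set = -oo) *)
Definition f_star (f : {mpoly R[n]}) : \bar R :=
  ereal_inf [set (f.@[x])%:E | x in [set: 'I_n -> R]].

Definition f_sos (f : {mpoly R[n]}) : \bar R :=
  ereal_sup [set r%:E | r in [set r : R | is_sos (f - r%:MP)]].

Definition f_gp (f : {mpoly R[n]}) (d : nat) : \bar R :=
  ereal_sup [set r%:E | r in [set r : R | gp_feasible f d r]].

End Defs.

From HB Require Import structures.
From mathcomp Require Import all_boot all_order all_algebra.
Import Order.TTheory GRing.Theory Num.Theory.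
From mathcomp Require Import mpoly.
From mathcomp Require Import boolp classical_sets reals constructive_ereal ereal exp.
From mathcomp Require Import ring lra.
Local Open Scope ring_scope.
Set Implicit Arguments. Unset Strict Implicit. Unset Printing Implicit Defensive.

(* Write f = f_0 + sum_i c_i X_i^(2d) + F X^al, where al is the only element of
   Omega.  Always f_gp <= f_sos <= f_*.  A gp-feasible r gives an explicit
   certificate: f - r splits into nonnegative pure terms, a nonnegative constant
   and the circuit polynomial sum_i a_i X_i^(2d) + b mu^(2d) + F X^al, which is a
   sum of squares by Hurwitz's identity for the AM-GM inequality on 2d terms.
   Conversely, if r <= f everywhere, then evaluating f along suitable curves shows
   r <= f_0 and c_i >= 0, with c_i > 0 when al_i > 0 and al lies in Delta; then
   a_i := c_i on the support of al (scaled down when |al| = 2d) is gp-feasible,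
   the constraint on f_0 - r being f evaluated at the minimiser of the circuit. *)

Section SumsOfSquares.
Variables (R : realType) (n : nat).
Notation P := {mpoly R[n]}.

Lemma sos0 : is_sos (0 : P).
Proof. by exists [::]; rewrite big_nil. Qed.

Lemma sos_sqr (q : P) : is_sos (q ^+ 2).
Proof. by exists [:: q]; rewrite big_seq1. Qed.

Lemma sosD (p q : P) : is_sos p -> is_sos q -> is_sos (p + q).
Proof. by move=> [s ->] [t ->]; exists (s ++ t); rewrite big_cat. Qed.

Lemma sosM (p q : P) : is_sos p -> is_sos q -> is_sos (p * q).
Proof.
move=> [s ->] [t ->]; exists [seq a * b | a <- s, b <- t].
rewrite big_allpairs_dep mulr_suml; apply: eq_bigr => a _.
by rewrite mulr_sumr; apply: eq_bigr => b _; rewrite exprMn.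
Qed.

Lemma sos_sum (I : Type) (r : seq I) (F : I -> P) :
  (forall i, is_sos (F i)) -> is_sos (\sum_(i <- r) F i).
Proof. by move=> sosF; apply: big_ind => //; [exact: sos0 | exact: sosD]. Qed.

Lemma sos_mpolyC (c : R) : 0 <= c -> is_sos (c%:MP : P).
Proof.
move=> c_ge0; exists [:: (Num.sqrt c)%:MP].
by rewrite big_seq1 -rmorphXn /= sqr_sqrtr.
Qed.

Lemma sos_mulC (c : R) (p : P) : 0 <= c -> is_sos p -> is_sos (c%:MP * p).
Proof. by move=> c_ge0; apply: sosM; apply: sos_mpolyC. Qed.

Lemma sos_natrM (k : nat) (p : P) : is_sos p -> is_sos (k%:R * p).
Proof. by rewrite -mpolyC_nat; apply: sos_mulC. Qed.

Lemma sos_natrMK (k : nat) (p : P) : (0 < k)%N -> is_sos (k%:R * p) -> is_sos p.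
Proof.
move=> k_gt0 /(@sos_mulC k%:R^-1); rewrite invr_ge0 ler0n => /(_ isT).
rewrite -mpolyC_nat mulrA -mpolyCM mulVf ?mpolyC1 ?mul1r //.
by rewrite pnatr_eq0 -lt0n.
Qed.

Lemma sos_le_meval (p : P) (r : R) (x : 'I_n -> R) :
  is_sos (p - r%:MP) -> r <= p.@[x].
Proof.
move=> [s E]; rewrite -subr_ge0 -(mevalC x r) -mevalB E raddf_sum /=.
by apply: sumr_ge0 => q _; rewrite rmorphXn /= sqr_ge0.
Qed.

(* Hurwitz's proof that the AM-GM inequality has a sum-of-squares certificate. *)
Fixpoint amgm_cofactor (a b : P) (m : nat) : P :=
  if m is k.+1 then b * amgm_cofactor a b k + k.+1%:R * a ^+ k else 0.

Lemma amgm_cofactorE (a b : P) (m : nat) :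
  m%:R * a ^+ m.+1 - m.+1%:R * a ^+ m * b + b ^+ m.+1
  = (a - b) ^+ 2 * amgm_cofactor a b m.
Proof.
elim: m => [|m IH] /=; first by rewrite !expr0 !expr1 mulr0; ring.
have -> : (a - b) ^+ 2 * (b * amgm_cofactor a b m + m.+1%:R * a ^+ m)
   = b * ((a - b) ^+ 2 * amgm_cofactor a b m) + m.+1%:R * a ^+ m * (a - b) ^+ 2.
  by ring.
by rewrite -IH !exprS -[m.+2]addn2 -[m.+1]addn1 !natrD; ring.
Qed.

Lemma sos_amgm_cofactor (p q : P) (m : nat) :
  is_sos (amgm_cofactor (p ^+ 2) (q ^+ 2) m).
Proof.
elim: m => [|m IH] /=; first exact: sos0.
apply: sosD; first by apply: sosM => //; apply: sos_sqr.
by apply: sos_natrM; rewrite -exprM mulnC exprM; apply: sos_sqr.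
Qed.

Lemma sos_amgm_sqr (s : seq P) :
  is_sos (\sum_(p <- s) (p ^+ 2) ^+ size s - (size s)%:R * \prod_(p <- s) p ^+ 2).
Proof.
elim: s => [|w s IH]; first by rewrite !big_nil mul0r subr0; apply: sos0.
case: (posnP (size s)) => [/size0nil ->|s_gt0].
  by rewrite /= big_seq1 big_seq1 expr1 mul1r subrr; apply: sos0.
set m := size s; rewrite /= -/m.
apply: (sos_natrMK s_gt0).
(* Sum the cofactor identity over p in s; what remains is (m+1) w^2 times the
   induction hypothesis. *)
have avg : \sum_(p <- s) ((p ^+ 2 - w ^+ 2) ^+ 2 * amgm_cofactor (p ^+ 2) (w ^+ 2) m)
    = m%:R * \sum_(p <- s) (p ^+ 2) ^+ m.+1
      - m.+1%:R * (\sum_(p <- s) (p ^+ 2) ^+ m) * w ^+ 2 + (w ^+ 2) ^+ m.+1 *+ m.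
  rewrite -(eq_bigr _ (fun p _ => amgm_cofactorE _ _ _)) !big_split /= sumrN.
  by rewrite big_const_seq count_predT iter_addr_0 !mulr_sumr mulr_suml.
have -> : m%:R * (\sum_(p <- w :: s) (p ^+ 2) ^+ m.+1
                   - m.+1%:R * \prod_(p <- w :: s) p ^+ 2)
  = \sum_(p <- s) ((p ^+ 2 - w ^+ 2) ^+ 2 * amgm_cofactor (p ^+ 2) (w ^+ 2) m)
    + m.+1%:R * w ^+ 2 * (\sum_(p <- s) (p ^+ 2) ^+ m - m%:R * \prod_(p <- s) p ^+ 2).
  by rewrite avg !big_cons -[m.+1]addn1 natrD; ring.
apply: sosD.
  by apply: sos_sum => p; apply: sosM; [apply: sos_sqr | apply: sos_amgm_cofactor].
by rewrite -mulrA; apply: sos_natrM; apply: sosM => //; apply: sos_sqr.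
Qed.

Lemma sos_amgm (s : seq P) (k : nat) (e : R) : size s = (2 * k)%N -> e ^+ 2 = 1 ->
  is_sos (\sum_(p <- s) p ^+ (2 * k) - (2 * k)%:R * e%:MP * \prod_(p <- s) p).
Proof.
move=> size_s e2.
have sizeA : size (take k s) = k.
  by apply: size_takel; rewrite size_s mul2n -addnn leq_addr.
have sizeB : size (drop k s) = k by rewrite size_drop size_s mul2n -addnn addnK.
have sum_exprM r : \sum_(p <- r) p ^+ (2 * k) = \sum_(p <- r) (p ^+ 2) ^+ k.
  by apply: eq_bigr => p _; rewrite exprM.
rewrite -(cat_take_drop k s) !big_cat /= !sum_exprM.
set A := take k s in sizeA *; set B := drop k s in sizeB *.
have := sos_amgm_sqr A; have := sos_amgm_sqr B.
rewrite sizeA sizeB !prodrXl.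
set PA := \prod_(p <- A) p; set PB := \prod_(p <- B) p.
set SA := \sum_(p <- A) _; set SB := \sum_(p <- B) _ => sosB sosA.
(* Split 2k-term AM-GM into two k-term ones plus the square (PA - e PB)^2. *)
have -> : SA + SB - (2 * k)%:R * e%:MP * (PA * PB) =
   (SA - k%:R * PA ^+ 2) + (SB - k%:R * PB ^+ 2) + k%:R * (PA - e%:MP * PB) ^+ 2
   + k%:R * (1 - e%:MP ^+ 2) * PB ^+ 2.
  by rewrite natrM; ring.
rewrite -rmorphXn /= e2 mpolyC1 subrr mulr0 mul0r addr0.
by apply: sosD; [exact: sosD | apply: sos_natrM; exact: sos_sqr].
Qed.
End SumsOfSquares.

Section PureMonomials.
Variables (n d : nat).
Hypothesis d_gt0 : (0 < d)%N.

Lemma pure_mnmE (i j : 'I_n) : pure_mnm d i j = if i == j then (2 * d)%N else 0%N.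
Proof. by rewrite /pure_mnm mulmnE mnm1E; case: (i == j); rewrite ?mul1n ?mul0n. Qed.

Lemma mpolyX_pure (R : nzRingType) (i : 'I_n) :
  ('X_[pure_mnm d i] : {mpoly R[n]}) = 'X_i ^+ (2 * d).
Proof. by rewrite /pure_mnm mpolyXn. Qed.

Lemma pure_mnm_neq0 (i : 'I_n) : pure_mnm d i != 0%MM.
Proof.
apply/eqP => /mnmP /(_ i); rewrite pure_mnmE eqxx mnm0E => /eqP.
by rewrite muln_eq0 /= gtn_eqF.
Qed.

Lemma eq_pure_mnm (i j : 'I_n) : (pure_mnm d i == pure_mnm d j) = (i == j).
Proof.
apply/eqP/eqP => [/mnmP /(_ i)|-> //]; rewrite !pure_mnmE eqxx.
by case: eqP => // _ /eqP; rewrite muln_eq0 /= gtn_eqF.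
Qed.

End PureMonomials.

Section Roots.
Variable R : realType.

Definition nroot (k : nat) (x : R) : R := x `^ k%:R^-1.

Lemma nrootK (k : nat) (x : R) : (0 < k)%N -> 0 <= x -> nroot k x ^+ k = x.
Proof.
move=> k_gt0 x_ge0; rewrite /nroot -powR_mulrn ?powR_ge0 // -powRrM.
by rewrite mulVf ?powRr1 // pnatr_eq0 -lt0n.
Qed.

Lemma nroot_gt0 (k : nat) (x : R) : 0 < x -> 0 < nroot k x.
Proof. exact: powR_gt0. Qed.

Lemma nrootX (k j : nat) (x : R) : 0 <= x -> nroot k (x ^+ j) = nroot k x ^+ j.
Proof.
move=> x_ge0; rewrite /nroot -(powR_mulrn j x_ge0) -(powR_mulrn j (powR_ge0 x _)).
by rewrite -!powRrM mulrC.
Qed.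

End Roots.

Section Weights.
Variables (R : realType) (n : nat).
Implicit Types (x y a : 'I_n -> R) (al : 'X_{1..n}).

Lemma mpow_gt0 x al : (forall i, (0 < al i)%N -> 0 < x i) -> 0 < mpow x al.
Proof.
move=> x_gt0; apply: prodr_gt0 => i _.
by have [->|/x_gt0/exprn_gt0 //] := posnP (al i); rewrite expr0.
Qed.

Lemma mpow_eq0 x al (i : 'I_n) : x i = 0 -> (0 < al i)%N -> mpow x al = 0.
Proof. by move=> xi0 al_gt0; rewrite /mpow (bigD1 i) //= xi0 expr0n gtn_eqF // mul0r. Qed.

Lemma mpowM x y al : mpow (fun i => x i * y i) al = mpow x al * mpow y al.
Proof. by rewrite /mpow -big_split; apply: eq_bigr => i _; rewrite exprMn. Qed.

Lemma mpowV x al : mpow (fun i => (x i)^-1) al = (mpow x al)^-1.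
Proof. by rewrite /mpow -prodfV; apply: eq_bigr => i _; rewrite exprVn. Qed.

Lemma mpow_cst (c : R) al : mpow (fun _ => c) al = c ^+ mdeg al.
Proof. by rewrite /mpow prodrXr mdegE. Qed.

Lemma mpow_sign_flip (G : R) al :
  (G < 0) || [exists i, odd (al i)] ->
  exists s : 'I_n -> R, (forall i, s i ^+ 2 = 1) /\ G * mpow s al = - `|G|.
Proof.
have [G_lt0 _|G_ge0 /= /existsP [k al_odd]] := ltP G 0.
  exists (fun _ => 1); split=> [i|]; first by rewrite expr1n.
  by rewrite /mpow big1 ?mulr1 ?ltr0_norm ?opprK // => i _; rewrite expr1n.
exists (fun i => if i == k then -1 else 1); split=> [i|].
  by case: ifP; rewrite ?sqrrN expr1n.
rewrite /mpow (bigD1 k) //= eqxx big1 ?mulr1 => [|i /negbTE ->]; last by rewrite expr1n.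
by rewrite -signr_odd al_odd expr1 ger0_norm // mulrN1.
Qed.

Lemma mself_gt0 al : 0 < mself R al.
Proof. by apply: mpow_gt0 => i; rewrite ltr0n. Qed.

(* The conditions imposed on each a_alpha in the definition of f_gp. *)
Definition gp_weight a al := forall i, 0 <= a i /\ (a i = 0 <-> al i = 0%N).

(* Weighted AM-GM is applied to a_i x_i^m = al_i (lam_i x_i)^m. *)
Definition amgm_lam (m : nat) a al (i : 'I_n) : R := nroot m (a i / (al i)%:R).

(* The constant term b mu^m of the circuit needed to balance |G| X^al. *)
Definition amgm_mu (m : nat) a al (G : R) : R :=
  nroot (m - mdeg al) (`|G| / (m%:R * mpow (amgm_lam m a al) al)).

Section GpWeight.
Variables (m : nat) (a : 'I_n -> R) (al : 'X_{1..n}).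
Hypotheses (m_gt0 : (0 < m)%N) (wa : gp_weight a al).

Lemma gp_weight_ge0 i : 0 <= a i. Proof. by have [] := wa i. Qed.

Lemma gp_weight_eq0 i : al i = 0%N -> a i = 0. Proof. by have [_ []] := wa i. Qed.

Lemma gp_weight_gt0 i : (0 < al i)%N -> 0 < a i.
Proof.
move=> al_gt0; rewrite lt_def gp_weight_ge0 andbT; apply/eqP => /(proj1 (proj2 (wa i))).
by move=> al0; rewrite al0 in al_gt0.
Qed.

Lemma mpow_gp_weight_gt0 : 0 < mpow a al.
Proof. exact/mpow_gt0/gp_weight_gt0. Qed.

Lemma amgm_lamK i : (al i)%:R * amgm_lam m a al i ^+ m = a i.
Proof.
have [al0|al_gt0] := posnP (al i); first by rewrite al0 gp_weight_eq0 // mul0r.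
rewrite /amgm_lam nrootK // ?divr_ge0 ?gp_weight_ge0 ?ler0n //.
by rewrite mulrC divfK // pnatr_eq0 -lt0n.
Qed.

Lemma mpow_amgm_lam_gt0 : 0 < mpow (amgm_lam m a al) al.
Proof.
apply: mpow_gt0 => i al_gt0; apply: nroot_gt0.
by rewrite divr_gt0 ?gp_weight_gt0 // ltr0n.
Qed.

Lemma mpow_amgm_lamX : mpow (amgm_lam m a al) al ^+ m = mpow a al / mself R al.
Proof.
rewrite /mself /mpow -prodrXl -prodf_div; apply: eq_bigr => i _.
have [->|al_gt0] := posnP (al i); first by rewrite !expr0 expr1n divr1.
rewrite -exprM mulnC exprM -[a i]amgm_lamK exprMn mulrAC divff ?mul1r //.
by rewrite expf_neq0 // pnatr_eq0 -lt0n.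
Qed.

Lemma amgm_muK (G : R) : (mdeg al < m)%N ->
  m%:R * mpow (amgm_lam m a al) al * amgm_mu m a al G ^+ (m - mdeg al) = `|G|.
Proof.
move=> al_lt; have lam_gt0 := mpow_amgm_lam_gt0.
have mL_gt0 : 0 < m%:R * mpow (amgm_lam m a al) al by rewrite mulr_gt0 ?ltr0n.
rewrite /amgm_mu nrootK ?subn_gt0 ?divr_ge0 ?normr_ge0 ?(ltW mL_gt0) //.
by rewrite mulrC divfK ?gt_eqF.
Qed.

Lemma gp_weight_balance (G : R) : mdeg al = m ->
  m%:R ^+ m * mpow a al = `|G| ^+ m * mself R al ->
  m%:R * mpow (amgm_lam m a al) al = `|G|.
Proof.
move=> deg_al eq_m; have lam_gt0 := mpow_amgm_lam_gt0.
apply/eqP; rewrite -(eqrXn2 m_gt0) ?mulr_ge0 ?ler0n ?normr_ge0 ?(ltW lam_gt0) //.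
by rewrite exprMn mpow_amgm_lamX mulrA eq_m mulfK // gt_eqF // mself_gt0.
Qed.

Lemma gp_termE (G : R) :
  (m - mdeg al)%N%:R *
   powR (`|G| ^+ m * mself R al / (m%:R ^+ m * mpow a al)) ((m - mdeg al)%N%:R^-1)
  = (m - mdeg al)%N%:R * amgm_mu m a al G ^+ m.
Proof.
have lam_gt0 := mpow_amgm_lam_gt0.
have mL_gt0 : 0 < m%:R * mpow (amgm_lam m a al) al by rewrite mulr_gt0 ?ltr0n.
congr (_ * _); rewrite /amgm_mu -nrootX ?divr_ge0 ?normr_ge0 ?(ltW mL_gt0) //.
rewrite /nroot expr_div_n exprMn mpow_amgm_lamX; congr (_ `^ _).
have ma_gt0 := mpow_gp_weight_gt0; have ms_gt0 := mself_gt0 al.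
by field; rewrite !gt_eqF ?exprn_gt0 ?ltr0n.
Qed.

End GpWeight.
End Weights.

Section Circuit.
Variables (R : realType) (n : nat).
Notation P := {mpoly R[n]}.

Definition circuit (d : nat) (a : 'I_n -> R) (c0 G : R) (al : 'X_{1..n}) : P :=
  \sum_(i < n) a i *: 'X_[pure_mnm d i] + c0%:MP + G *: 'X_[al].

Lemma meval_circuit (d : nat) (a : 'I_n -> R) (c0 G : R) (al : 'X_{1..n}) (x : 'I_n -> R) :
  (circuit d a c0 G al).@[x] = c0 + \sum_(i < n) a i * x i ^+ (2 * d) + G * mpow x al.
Proof.
rewrite !mevalD mevalC mevalZ mevalX raddf_sum /= [X in X + _]addrC.
by under eq_bigr do rewrite mevalZ mpolyX_pure rmorphXn /= mevalXU.
Qed.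

Lemma sos_sum_pure (d : nat) (b : 'I_n -> R) : (forall i, 0 <= b i) ->
  is_sos (\sum_(i < n) b i *: ('X_[pure_mnm d i] : P)).
Proof.
move=> b_ge0; apply: sos_sum => i; rewrite -mul_mpolyC mpolyX_pure mulnC exprM.
by apply: sos_mulC => //; apply: sos_sqr.
Qed.

Lemma sos_mpolyX_even (al : 'X_{1..n}) : (forall i, ~~ odd (al i)) -> is_sos ('X_[al] : P).
Proof.
move=> al_even; set g := [multinom (al i)./2 | i < n].
have -> : ('X_[al] : P) = 'X_[g] ^+ 2.
  rewrite mpolyXn; congr mpolyX; apply/mnmP => i; rewrite mulmnE mnmE.
  by rewrite -{1}(odd_double_half (al i)) (negbTE (al_even i)) add0n -mul2n mulnC.
exact: sos_sqr.
Qed.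

Lemma sos_circuit (d : nat) (a : 'I_n -> R) (al : 'X_{1..n}) (b : nat) (mu G : R) :
  (0 < d)%N -> gp_weight a al -> (mdeg al + b = 2 * d)%N ->
  (2 * d)%:R * mpow (amgm_lam (2 * d) a al) al * mu ^+ b = `|G| ->
  is_sos (circuit d a (b%:R * mu ^+ (2 * d)) G al).
Proof.
move=> d_gt0 wa deg_b balance; rewrite /circuit.
have m_gt0 : (0 < 2 * d)%N by rewrite muln_gt0.
set lam := amgm_lam (2 * d) a al.
(* The 2d terms of the AM-GM: al_i copies of lam_i X_i and b copies of mu. *)
set s := flatten [seq nseq (al i) ((lam i)%:MP * 'X_i : P) | i <- index_enum 'I_n]
          ++ nseq b (mu%:MP : P).
have size_s : size s = (2 * d)%N.
  rewrite size_cat size_nseq size_flatten /shape -map_comp sumnE big_map.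
  by under eq_bigr do rewrite /= size_nseq; rewrite -deg_b mdegE.
set e : R := if G < 0 then 1 else -1.
have e2 : e ^+ 2 = 1 by rewrite /e; case: ifP; rewrite ?sqrrN expr1n.
have eG : - (`|G| * e) = G.
  rewrite /e; case: ifP => [/ltW/ler0_norm -> |/negbT]; first by rewrite mulr1 opprK.
  by rewrite -leNgt => /ger0_norm ->; rewrite mulrN1 opprK.
have := sos_amgm size_s e2.
have -> : \sum_(p <- s) p ^+ (2 * d)
   = \sum_(i < n) a i *: ('X_[pure_mnm d i] : P) + (b%:R * mu ^+ (2 * d))%:MP.
  rewrite big_cat big_flatten !big_map big_nseq iter_addr_0 /=; congr (_ + _).
    apply: eq_bigr => i _; rewrite big_nseq iter_addr_0 exprMn -rmorphXn /= -mpolyX_pure.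
    rewrite -(amgm_lamK m_gt0 wa i) -mul_mpolyC mpolyCM mpolyC_nat -mulr_natl; ring.
  by rewrite mpolyCM mpolyC_nat rmorphXn mulr_natl.
have -> : \prod_(p <- s) p = (mpow lam al * mu ^+ b)%:MP * 'X_[al].
  rewrite big_cat big_flatten !big_map big_nseq iter_mulr_1 /= mpolyXE_id /mpow.
  under eq_bigr do rewrite big_nseq iter_mulr_1 exprMn -rmorphXn.
  by rewrite big_split /= mpolyCM rmorph_prod /= rmorphXn; ring.
have -> : (2 * d)%:R * e%:MP * ((mpow lam al * mu ^+ b)%:MP * ('X_[al] : P))
   = (`|G| * e)%:MP * 'X_[al].
  by rewrite -balance -mpolyC_nat !mpolyCM; ring.
by rewrite -mulNr -mpolyCN eG mul_mpolyC.
Qed.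

End Circuit.

Section SingleOmega.
Variables (R : realType) (n d : nat) (f : {mpoly R[n]}) (al : 'X_{1..n}).
Hypotheses (d_gt0 : (0 < d)%N) (Omega_al : Omega f d = [:: al]).

Lemma Omega_mem : al \in msupp f /\ ~~ excluded_mnm d al.
Proof.
have : al \in Omega f d by rewrite Omega_al mem_seq1.
by rewrite mem_filter => /andP [].
Qed.

Lemma Omega_neq0 : al != 0%MM.
Proof. by have [_] := Omega_mem; rewrite /excluded_mnm negb_or => /andP []. Qed.

Lemma Omega_neq_pure (i : 'I_n) : al != pure_mnm d i.
Proof.
have [_] := Omega_mem; rewrite /excluded_mnm negb_or => /andP [_].
by rewrite negb_exists => /forallP /(_ i).
Qed.

Lemma Omega_coef_neq0 : f@_al != 0.
Proof. by have [] := Omega_mem; rewrite mcoeff_msupp. Qed.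

Lemma Omega_exists_pos : exists i, (0 < al i)%N.
Proof.
apply/existsP; apply: contraR Omega_neq0; rewrite negb_exists => /forallP al0.
by apply/eqP/mnmP => i; rewrite mnm0E; apply/eqP; rewrite -leqn0 leqNgt al0.
Qed.

Lemma Omega_mdeg_le : msize f = (2 * d).+1 -> (mdeg al <= 2 * d)%N.
Proof. by move=> size_f; have [/msize_mdeg_lt] := Omega_mem; rewrite size_f ltnS. Qed.

Lemma mpoly_Omega1E : f = circuit d (fun i => f@_(pure_mnm d i)) f@_0%MM f@_al al.
Proof.
apply/mpolyP => m; rewrite /circuit [X in X + _]addrC !mcoeffD mcoeffC raddf_sum /=.
rewrite mcoeffZ mcoeffX.
under eq_bigr do rewrite mcoeffZ mcoeffX.
have [/orP [/eqP ->|/existsP [k /eqP ->]]|m_ok] := boolP (excluded_mnm d m).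
- rewrite eqxx mulr1 big1 ?addr0 => [|i _]; last first.
    by rewrite (negbTE (pure_mnm_neq0 d_gt0 i)) mulr0.
  by rewrite (negbTE Omega_neq0) mulr0 addr0.
- rewrite (negbTE (pure_mnm_neq0 d_gt0 k)) mulr0 add0r (bigD1 k) //= eqxx mulr1.
  rewrite big1 ?addr0 => [|i /negbTE ik]; last by rewrite eq_pure_mnm // ik mulr0.
  by rewrite (negbTE (Omega_neq_pure k)) mulr0 addr0.
- move: (m_ok); rewrite /excluded_mnm negb_or negb_exists => /andP [m0 /forallP m_pure].
  rewrite (negbTE m0) mulr0 add0r big1 ?add0r => [|i _]; last first.
    by rewrite eq_sym (negbTE (m_pure i)) mulr0.
  have [->|alm] := eqVneq al m; first by rewrite mulr1.
  rewrite mulr0; apply/eqP; rewrite -[_ == 0]negbK -mcoeff_msupp; apply/negP => m_supp.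
  have : m \in Omega f d by rewrite mem_filter m_ok m_supp.
  by rewrite Omega_al mem_seq1 eq_sym (negbTE alm).
Qed.

Lemma meval_Omega1 (x : 'I_n -> R) :
  f.@[x] = f@_0%MM + \sum_(i < n) f@_(pure_mnm d i) * x i ^+ (2 * d) + f@_al * mpow x al.
Proof. by rewrite {1}mpoly_Omega1E meval_circuit. Qed.

End SingleOmega.

Section SingleOmegaSos.
Variables (R : realType) (n d : nat) (f : {mpoly R[n]}) (al : 'X_{1..n}).
Hypotheses (d_gt0 : (0 < d)%N) (Omega_al : Omega f d = [:: al]).
Notation c := (fun i : 'I_n => f@_(pure_mnm d i)).
Notation F := (f@_al).
Notation f0 := (f@_0%MM).

Definition in_Delta : bool := (F < 0) || [exists i, odd (al i)].

Lemma Delta_Omega1 : Delta f d = if in_Delta then [:: al] else [::].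
Proof. by rewrite /Delta Omega_al /= /in_Delta; case: ifP. Qed.

Lemma normF_gt0 : 0 < `|F|.
Proof. by rewrite normr_gt0 (Omega_coef_neq0 Omega_al). Qed.

Lemma mpolyB_Omega1E (r : R) : f - r%:MP = circuit d c (f0 - r) F al.
Proof. by rewrite {1}(mpoly_Omega1E d_gt0 Omega_al) /circuit mpolyCB; ring. Qed.

Lemma sos_Omega1_notin_Delta (r : R) :
  ~~ in_Delta -> (forall i, 0 <= c i) -> r <= f0 -> is_sos (f - r%:MP).
Proof.
rewrite /in_Delta negb_or negb_exists -leNgt => /andP [F_ge0 /forallP al_even] c_ge0 r_le.
rewrite mpolyB_Omega1E /circuit; apply: sosD; first apply: sosD.
- exact: sos_sum_pure.
- by apply: sos_mpolyC; rewrite subr_ge0.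
by rewrite -mul_mpolyC; apply: sos_mulC => //; apply: sos_mpolyX_even.
Qed.

Lemma sos_Omega1_circuit (r c0 : R) (a : 'I_n -> R) :
  (forall i, a i <= c i) -> c0 <= f0 - r -> is_sos (circuit d a c0 F al) ->
  is_sos (f - r%:MP).
Proof.
move=> a_le c0_le sos_circ.
have -> : f - r%:MP = circuit d (fun i => c i - a i) (f0 - r - c0) 0 al + circuit d a c0 F al.
  rewrite mpolyB_Omega1E /circuit scale0r addr0.
  under [\sum_(i < n) (_ - _) *: _]eq_bigr do rewrite scalerBl.
  by rewrite sumrB !mpolyCB; ring.
apply: sosD => //; rewrite /circuit scale0r addr0; apply: sosD.
  by apply: sos_sum_pure => i; rewrite subr_ge0.
by apply: sos_mpolyC; rewrite subr_ge0.
Qed.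

Lemma gp_feasible_sos (r : R) : msize f = (2 * d).+1 ->
  gp_feasible f d r -> is_sos (f - r%:MP).
Proof.
move=> size_f [a [wa [deg_eq [coef_le const_le]]]].
rewrite /Delta_lt Delta_Omega1 in wa deg_eq coef_le const_le.
case: ifP => inD in wa deg_eq coef_le const_le; last first.
  apply: sos_Omega1_notin_Delta; first by rewrite inD.
    by move=> i; have := coef_le i; rewrite big_nil.
  by move: const_le; rewrite big_nil subr_ge0.
have {}wa : gp_weight (a al) al by move=> i; apply: wa; rewrite mem_head.
have {}coef_le i : a al i <= c i by have := coef_le i; rewrite big_seq1.
have m_gt0 : (0 < 2 * d)%N by rewrite muln_gt0.
have [deg_lt|deg_ge] := ltnP (mdeg al) (2 * d).
  move: const_le; rewrite /= deg_lt big_seq1 (gp_termE m_gt0 wa) => const_le.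
  apply: (sos_Omega1_circuit coef_le const_le).
  by apply: sos_circuit => //; [rewrite subnKC // ltnW | exact: amgm_muK].
have deg_al : mdeg al = (2 * d)%N.
  by apply/eqP; rewrite eqn_leq deg_ge (Omega_mdeg_le Omega_al size_f).
move: const_le; rewrite /= deg_al ltnn big_nil => const_le.
apply: (sos_Omega1_circuit coef_le const_le).
rewrite -(mul0r (1 ^+ (2 * d))); apply: (sos_circuit (b := 0)); rewrite ?addn0 ?mulr1 //.
by apply: gp_weight_balance; rewrite ?deg_al //; apply: deg_eq; rewrite ?mem_head.
Qed.

End SingleOmegaSos.

Section SingleOmegaLowerBound.
Variables (R : realType) (n d : nat) (f : {mpoly R[n]}) (al : 'X_{1..n}) (r : R).
Hypotheses (d_gt0 : (0 < d)%N) (size_f : msize f = (2 * d).+1)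
  (Omega_al : Omega f d = [:: al]) (f_ge : forall x, r <= f.@[x]).
Notation c := (fun i : 'I_n => f@_(pure_mnm d i)).
Notation F := (f@_al).
Notation f0 := (f@_0%MM).

Let m_gt0 : (0 < 2 * d)%N. Proof. by rewrite muln_gt0. Qed.

Let meval_f := meval_Omega1 d_gt0 Omega_al.

Lemma Omega1_const_ge : r <= f0.
Proof.
have [i al_gt0] := Omega_exists_pos Omega_al.
have := f_ge (fun _ => 0); rewrite meval_f (mpow_eq0 (i := i)) // mulr0 addr0.
by rewrite big1 ?addr0 // => j _; rewrite expr0n gtn_eqF // mulr0.
Qed.

Lemma mpow_axis_le (i : 'I_n) (t : R) : 1 <= t ->
  `|mpow (fun j => if j == i then t else 0) al| <= t ^+ (2 * d).-1.
Proof.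
move=> t_ge1; have t_ge0 : 0 <= t by apply: le_trans t_ge1.
have [/existsP [j /andP [ji al_gt0]]|] := boolP [exists j, (j != i) && (0 < al j)%N].
  by rewrite (mpow_eq0 (i := j)) ?(negbTE ji) // normr0 exprn_ge0.
rewrite negb_exists => /forallP al_axis.
have al0 j : j != i -> al j = 0%N.
  by move=> ji; apply/eqP; have := al_axis j; rewrite ji /= -leqNgt leqn0.
have -> : mpow (fun j => if j == i then t else 0) al = t ^+ al i.
  by rewrite /mpow (bigD1 i) //= eqxx big1 ?mulr1 // => j ji; rewrite al0.
have deg_al : mdeg al = al i.
  by rewrite mdegE (bigD1 i) //= big1 ?addn0 // => j ji; rewrite al0.
have al_lt : (al i < 2 * d)%N.
  rewrite ltn_neqAle -deg_al (Omega_mdeg_le Omega_al size_f) andbT.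
  apply: contra (Omega_neq_pure Omega_al i) => /eqP deg_eq; apply/eqP/mnmP => j.
  rewrite pure_mnmE; case: eqP => [<-|/eqP ji]; first by rewrite -deg_eq.
  by rewrite al0 // eq_sym.
by rewrite ger0_norm ?exprn_ge0 // ler_weXn2l // -ltnS prednK.
Qed.

(* Along the axis t e_i, f = f0 + c_i t^(2d) + O(t^(2d-1)). *)
Lemma Omega1_pure_coef_ge0 (i : 'I_n) : 0 <= c i.
Proof.
rewrite leNgt; apply/negP => ci_lt0.
set K := `|F| + `|f0 - r| + 1.
set t := Num.max 1 (K / - c i).
have t_ge1 : 1 <= t by rewrite le_max lexx.
have cK : K <= - c i * t.
  by rewrite mulrC -ler_pdivrMr ?oppr_gt0 // le_max lexx orbT.
have := f_ge (fun j => if j == i then t else 0); rewrite meval_f.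
rewrite (bigD1 i) //= eqxx big1 ?addr0 => [|j /negbTE ->]; last first.
  by rewrite expr0n gtn_eqF // mulr0.
have := mpow_axis_le i t_ge1.
set u := t ^+ (2 * d).-1; set M := mpow _ al => M_le.
have u_ge1 : 1 <= u by apply: exprn_ege1.
have -> : t ^+ (2 * d) = t * u by rewrite /u -exprS prednK.
have FM : F * M <= `|F| * u.
  by apply: le_trans (ler_norm _) _; rewrite normrM ler_wpM2l.
have := ler_norm (f0 - r).
have : 0 <= (- c i * t - K) * u by rewrite mulr_ge0 ?subr_ge0 // (le_trans _ u_ge1).
have : 0 <= (`|f0 - r| + 1) * (u - 1) by rewrite mulr_ge0 ?subr_ge0 ?addr_ge0.
rewrite /K; nra.
Qed.

Section InDelta.
Variable s : 'I_n -> R.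
Hypotheses (s_sqr : forall i, s i ^+ 2 = 1) (s_flip : F * mpow s al = - `|F|).

Let s_exp i : s i ^+ (2 * d) = 1.
Proof. by rewrite exprM s_sqr expr1n. Qed.

(* Along s_j t^[j = k], the monomial F X^al decreases like -|F| t^(al_k). *)
Lemma Omega1_pure_coef_gt0 (k : 'I_n) : (0 < al k)%N -> 0 < c k.
Proof.
move=> al_gt0; rewrite lt_def Omega1_pure_coef_ge0 andbT; apply/negP => /eqP ck0.
set C := \sum_(j < n) `|c j|.
set t := Num.max 1 ((f0 + C - r + 1) / `|F|).
have t_ge1 : 1 <= t by rewrite le_max lexx.
have F_gt0 := normF_gt0 Omega_al.
have Ft : f0 + C - r + 1 <= `|F| * t.
  by rewrite mulrC -ler_pdivrMr // le_max lexx orbT.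
set y := fun j : 'I_n => if j == k then t else 1.
have := f_ge (fun j => s j * y j); rewrite meval_f.
have sum_le : \sum_(j < n) c j * (s j * y j) ^+ (2 * d) <= C.
  apply: ler_sum => j _; rewrite exprMn s_exp mul1r /y.
  by case: eqP => [->|_]; rewrite ?ck0 ?mul0r ?expr1n ?mulr1 ?normr_ge0 ?ler_norm.
have -> : F * mpow (fun j => s j * y j) al = - `|F| * t ^+ al k.
  rewrite mpowM mulrA s_flip; congr (_ * _).
  by rewrite /mpow (bigD1 k) //= /y eqxx big1 ?mulr1 // => j /negbTE ->; rewrite expr1n.
have : 0 <= `|F| * (t ^+ al k - t) by rewrite mulr_ge0 // subr_ge0 ler_eXnr.
nra.
Qed.

Definition supp_coef (i : 'I_n) : R := if (0 < al i)%N then c i else 0.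

Lemma gp_weight_supp_coef : gp_weight supp_coef al.
Proof.
move=> i; rewrite /supp_coef; have [al0|al_gt0] := posnP (al i); first by rewrite al0.
have ci_gt0 := Omega1_pure_coef_gt0 al_gt0.
split; [exact: ltW | split=> [ci0|al0]]; last by rewrite al0 in al_gt0.
by rewrite ci0 ltxx in ci_gt0.
Qed.

Let lam := amgm_lam (2 * d) supp_coef al.

(* The point at which every term of the AM-GM for the circuit equals nu^(2d). *)
Definition circuit_point (nu : R) (i : 'I_n) : R :=
  if (0 < al i)%N then s i * (nu / lam i) else 0.

Lemma meval_circuit_point (nu : R) :
  f.@[circuit_point nu]
  = f0 + (mdeg al)%:R * nu ^+ (2 * d) - `|F| * nu ^+ mdeg al / mpow lam al.
Proof.
have wa := gp_weight_supp_coef.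
rewrite meval_f; congr (_ + _ + _).
  rewrite mdegE natr_sum mulr_suml; apply: eq_bigr => i _.
  rewrite /circuit_point; have [al0|al_gt0] := posnP (al i).
    by rewrite al0 /= expr0n gtn_eqF // mulr0 mul0r.
  have lam_neq0 : lam i ^+ (2 * d) != 0.
    by rewrite expf_neq0 // gt_eqF // nroot_gt0 // divr_gt0 ?ltr0n ?(gp_weight_gt0 wa).
  rewrite exprMn s_exp mul1r expr_div_n.
  have <- : supp_coef i = c i by rewrite /supp_coef al_gt0.
  by rewrite -(amgm_lamK m_gt0 wa) -/lam; field.
have -> : mpow (circuit_point nu) al = mpow (fun i => s i * (nu * (lam i)^-1)) al.
  rewrite /mpow; apply: eq_bigr => i _; rewrite /circuit_point.
  by have [->|_] := posnP (al i); rewrite ?expr0.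
by rewrite mpowM mulrA s_flip mpowM mpow_cst mpowV mulNr mulrA.
Qed.

Lemma supp_coef_le (i : 'I_n) : supp_coef i <= c i.
Proof. by rewrite /supp_coef; case: ifP; rewrite ?Omega1_pure_coef_ge0. Qed.

Hypothesis inD : in_Delta f al.

Lemma Omega1_gp_feasible_deg_lt : (mdeg al < 2 * d)%N -> gp_feasible f d r.
Proof.
move=> deg_lt; have wa := gp_weight_supp_coef.
have L_gt0 : 0 < mpow lam al := mpow_amgm_lam_gt0 (2 * d) wa.
rewrite /gp_feasible /Delta_lt (Delta_Omega1 Omega_al) inD.
exists (fun _ => supp_coef); split; first by move=> m; rewrite mem_seq1 => /eqP ->.
split; first by move=> m; rewrite mem_seq1 => /eqP -> deg_eq; rewrite deg_eq ltnn in deg_lt.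
split; first by move=> i; rewrite big_seq1 supp_coef_le.
rewrite /= deg_lt big_seq1 (gp_termE m_gt0 wa).
set mu := amgm_mu (2 * d) supp_coef al F.
have := f_ge (circuit_point mu); rewrite meval_circuit_point -(amgm_muK m_gt0 wa F deg_lt).
rewrite -/lam -/mu.
have -> : (2 * d)%:R * mpow lam al * mu ^+ (2 * d - mdeg al) * mu ^+ mdeg al / mpow lam al
          = (2 * d)%:R * mu ^+ (2 * d).
  rewrite -[in mu ^+ (2 * d)](subnK (ltnW deg_lt)) exprD.
  by field; rewrite gt_eqF.
by rewrite natrB ?(ltnW deg_lt) //; lra.
Qed.

Lemma Omega1_circuit_le : mdeg al = (2 * d)%N -> `|F| <= (2 * d)%:R * mpow lam al.
Proof.
move=> deg_al; have wa := gp_weight_supp_coef.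
have L_gt0 : 0 < mpow lam al := mpow_amgm_lam_gt0 (2 * d) wa.
rewrite leNgt; apply/negP => circ_gt.
set del := `|F| / mpow lam al - (2 * d)%:R.
have del_gt0 : 0 < del by rewrite subr_gt0 ltr_pdivlMr // mulrC.
set nu := nroot (2 * d) ((`|f0 - r| + 1) / del).
have nuX : nu ^+ (2 * d) = (`|f0 - r| + 1) / del.
  by rewrite nrootK // divr_ge0 ?ltW // addr_ge0.
have := f_ge (circuit_point nu); rewrite meval_circuit_point -/lam deg_al nuX.
have -> : f0 + (2 * d)%:R * ((`|f0 - r| + 1) / del)
          - `|F| * ((`|f0 - r| + 1) / del) / mpow lam al = f0 - (`|f0 - r| + 1).
  have : 0 < `|F| - (2 * d)%:R * mpow lam al by rewrite subr_gt0.
  rewrite natrM /del => circ_pos; field.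
  by rewrite gt_eqF //= !mulNr lt0r_neq0.
have := ler_norm (f0 - r); clear deg_al; lra.
Qed.

Lemma Omega1_gp_feasible_deg_eq : mdeg al = (2 * d)%N -> gp_feasible f d r.
Proof.
move=> deg_al; have wa := gp_weight_supp_coef.
have L_gt0 : 0 < mpow lam al := mpow_amgm_lam_gt0 (2 * d) wa.
have dL_gt0 : 0 < (2 * d)%:R * mpow lam al by rewrite mulr_gt0 ?ltr0n.
(* Scale the weights down so that the AM-GM for the circuit is exactly balanced. *)
set rho := `|F| / ((2 * d)%:R * mpow lam al).
have rho_gt0 : 0 < rho by rewrite divr_gt0 ?(normF_gt0 Omega_al).
have rho_le1 : rho <= 1 by rewrite ler_pdivrMr ?mul1r ?Omega1_circuit_le.
rewrite /gp_feasible /Delta_lt (Delta_Omega1 Omega_al) inD.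
exists (fun _ i => rho * supp_coef i); split.
  move=> m; rewrite mem_seq1 => /eqP -> i; have [a_ge0 a_eq0] := wa i.
  split; first by rewrite mulr_ge0 // ltW.
  split=> [/eqP|/a_eq0 ->]; last by rewrite mulr0.
  by rewrite mulf_eq0 gt_eqF //= => /eqP /a_eq0.
split.
  move=> m; rewrite mem_seq1 => /eqP -> _.
  rewrite mpowM mpow_cst deg_al /rho expr_div_n exprMn (mpow_amgm_lamX m_gt0 wa).
  have ma_gt0 := mpow_gp_weight_gt0 wa; have ms_gt0 := mself_gt0 R al.
  by field; rewrite !gt_eqF ?exprn_gt0 ?ltr0n.
split=> [i|].
  by rewrite big_seq1 (le_trans _ (supp_coef_le i)) // ler_piMl // (gp_weight_ge0 wa).
by rewrite /= deg_al ltnn big_nil subr_ge0 Omega1_const_ge.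
Qed.

End InDelta.

Lemma Omega1_gp_feasible : gp_feasible f d r.
Proof.
have [inD|notinD] := boolP (in_Delta f al); last first.
  rewrite /gp_feasible /Delta_lt (Delta_Omega1 Omega_al) (negbTE notinD).
  exists (fun _ _ => 0); split=> //; split=> //.
  by split=> [i|]; rewrite big_nil ?subr_ge0 ?Omega1_const_ge ?Omega1_pure_coef_ge0.
have [s [s_sqr s_flip]] := mpow_sign_flip inD.
have [deg_lt|deg_ge] := ltnP (mdeg al) (2 * d).
  exact: Omega1_gp_feasible_deg_lt.
apply: Omega1_gp_feasible_deg_eq s_sqr s_flip inD _.
by apply/eqP; rewrite eqn_leq deg_ge (Omega_mdeg_le Omega_al size_f).
Qed.
End SingleOmegaLowerBound.

Unset Implicit Arguments.

Theorem mainTheorem5 (R : realType) (n d : nat) (f : {mpoly R[n]}) :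
  (0 < d)%N ->
  msize f = (2 * d).+1 ->
  size (Omega f d) = 1%N ->
  f_star f = f_sos f /\ f_sos f = f_gp f d.
Proof.
move=> d_gt0 size_f; case Omega_al: (Omega f d) => [|al [|]] // _.
have sos_le_star : (f_sos f <= f_star f)%E.
  apply: ge_ereal_sup => _ [r /= sos_r <-]; apply: le_ereal_inf_tmp => _ [x _ <-].
  by rewrite lee_fin; apply: sos_le_meval.
have gp_le_sos : (f_gp f d <= f_sos f)%E.
  apply: ereal_sup_le => _ [r gp_r <-]; exists r => //.
  exact: (gp_feasible_sos (R := R) d_gt0 Omega_al size_f gp_r).
have star_le_eval x : (f_star f <= (f.@[x])%:E)%E.
  by apply: ge_ereal_inf; exists (f.@[x])%:E => //; exists x.
have star_le_gp : (f_star f <= f_gp f d)%E.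
  case star_r: (f_star f) => [r| |]; last exact: leNye.
    apply: ereal_sup_ubound; exists r => //.
    apply: (Omega1_gp_feasible d_gt0 size_f Omega_al) => x.
    by have := star_le_eval x; rewrite star_r lee_fin.
  by have := star_le_eval (fun _ => 0); rewrite star_r.
split; apply/eqP; rewrite eq_le.
  by rewrite sos_le_star (le_trans star_le_gp gp_le_sos).
by rewrite gp_le_sos (le_trans sos_le_star star_le_gp).
Qed.
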